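(* Let $n\ge1$, let $q_1,q_2$ be powers of a prime $p$, $q=q_1\otimes q_2$, and $R=A(n,q_1,q_2)$. Let $J$ be the set of elements of $R$ of the form $\begin{pmatrix} 0 & v\\ 0 & 0\end{pmatrix}$, $v\in M_{n\times1}(\mathbb{F}_q)$ (this is the Jacobson radical of $R$). Then $J\cap Z(R)=\{0\}$, where $Z(R)$ is the center of $R$, and $|\mathscr{S}(R)|=|J|$.
   Context: For powers $q_1=p^{d_1}$, $q_2=p^{d_2}$ of a prime $p$, $q_1\otimes q_2:=p^{\operatorname{lcm}(d_1,d_2)}$; $\mathbb{F}_{q_1},\mathbb{F}_{q_2}$ are regarded as subfields of $\mathbb{F}_q$. $A(n,q_1,q_2)$ is the subring of $M_{n+1}(\mathbb{F}_q)$ of all block matrices $\begin{pmatrix} A & v\\ 0 & b\end{pmatrix}$ with $A\in M_n(\mathbb{F}_{q_1})$, $v\in M_{n\times 1}(\mathbb{F}_q)$, $b\in\mathbb{F}_{q_2}$. $\mathscr{S}(R)$ denotes the set of all semisimple complements to $J$ in $R$, i.e. $\mathbb{F}_p$-subalgebras $T$ of $R$ with $R=T\oplus J$ (and $T\cong R/J$). *)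

From HB Require Import structures.
From mathcomp Require Import all_boot all_order all_algebra all_field.
Set Implicit Arguments. Unset Strict Implicit. Unset Printing Implicit Defensive.
Import GRing.Theory.
Local Open Scope ring_scope.

Definition subfieldOf (F : finFieldType) (Q : nat) : {pred F} :=
  [pred x : F | x ^+ Q == x].

Section Defs.
Variables (F : finFieldType) (n : nat).

Definition wid (i : 'I_n) : 'I_n.+1 := widen_ord (leqnSn n) i.

(* A(n,q1,q2) inside M_{n+1}(F): upper-left n x n block over K1, bottom row
   zero except the corner, corner in K2, last column (rows < n) arbitrary. *)
Definition Aring (K1 K2 : {pred F}) : {set 'M[F]_n.+1} :=
  [set M : 'M[F]_n.+1 |
     [&& [forall i : 'I_n, forall j : 'I_n, M (wid i) (wid j) \in K1],
         [forall j : 'I_n, M ord_max (wid j) == 0] &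
         M ord_max ord_max \in K2]].

Definition Jrad : {set 'M[F]_n.+1} :=
  [set M : 'M[F]_n.+1 | [forall i, forall j,
     (M i j != 0) ==> ((i != ord_max) && (j == ord_max))]].

Definition center_of (R : {set 'M[F]_n.+1}) : {set 'M[F]_n.+1} :=
  [set x in R | [forall y in R, x * y == y * x]].

(* T is an F_p-subalgebra (= unital subring) of R with R = T (+) J. *)
Definition is_ss_complement (R J T : {set 'M[F]_n.+1}) : bool :=
  [&& T \subset R, (1 : 'M[F]_n.+1) \in T,
      [forall x in T, forall y in T, (x - y \in T) && (x * y \in T)],
      T :&: J == [set 0] &
      [forall r in R, exists t in T, r - t \in J]].

Definition ss_complements (R J : {set 'M[F]_n.+1}) : {set {set 'M[F]_n.+1}} :=
  [set T | is_ss_complement R J T].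

End Defs.
Arguments Aring : clear implicits.
Arguments Jrad : clear implicits.

From HB Require Import structures.
From mathcomp Require Import all_boot all_order all_algebra all_field.
Set Implicit Arguments. Unset Strict Implicit. Unset Printing Implicit Defensive.
Import GRing.Theory.
Local Open Scope ring_scope.

(* Every M in R is D + j with D block diagonal (D in Rdiag, a copy of R/J) and
   j in J, and J * J = 0.  For U in J, conjugation by 1 + U (whose inverse is
   1 - U) carries Rdiag to a complement T_U.  Conversely a complement T contains
   exactly one lift t = e - U of the corner idempotent e, and since [M, t] lies
   in T :&: J = 0 for M in T, one gets T = T_U; as e - U in T_U determines U,
   U |-> T_U is a bijection from J onto the complements.  The same idempotent
   gives J :&: Z(R) = 0, because v e = v and e v = 0 for v in J. *)

Section SqrZeroConjugation.
Variables (A : pzRingType) (u : A).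
Hypothesis sqr_u0 : u * u = 0.

Definition sqr0_conj (x : A) : A := (1 - u) * x * (1 + u).

Lemma sqr0_conj_inv : (1 + u) * (1 - u) = 1.
Proof. by rewrite mulrBr mulr1 mulrDl mul1r sqr_u0 addr0 addrK. Qed.

Lemma sqr0_conj1 : sqr0_conj 1 = 1.
Proof. by rewrite /sqr0_conj mulr1 mulrDr mulr1 mulrBl mul1r sqr_u0 subr0 subrK. Qed.

Lemma sqr0_conjB x y : sqr0_conj (x - y) = sqr0_conj x - sqr0_conj y.
Proof. by rewrite /sqr0_conj mulrBr mulrBl. Qed.

Lemma sqr0_conjM x y : sqr0_conj (x * y) = sqr0_conj x * sqr0_conj y.
Proof.
by rewrite /sqr0_conj !mulrA -[_ * (1 + u) * (1 - u)]mulrA sqr0_conj_inv mulr1.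
Qed.

End SqrZeroConjugation.

Lemma subfieldOf_subring_closed (F : finFieldType) (p d : nat) :
  p \in [pchar F] -> subring_closed (subfieldOf (F:=F) (p ^ d)).
Proof.
move=> pcharFp.
have pnat_q : [pchar F].-nat (p ^ d)%N.
  by rewrite (eq_pnat _ (pcharf_eq pcharFp)) pnatX pnat_id ?(pcharf_prime pcharFp) ?orbT.
split=> [|x y|x y]; rewrite !inE ?expr1n //= => /eqP xq /eqP yq.
  by rewrite exprDn_pchar // exprNn_pchar // xq yq.
by rewrite exprMn xq yq.
Qed.

Section Radical.
Variables (F : finFieldType) (n : nat).
Implicit Types (M D U V : 'M[F]_n.+1) (R J T : {set 'M[F]_n.+1}).

Lemma ss_complementP R J T :
  reflect [/\ T \subset R, 1 \in T,
              {in T &, forall x y, x - y \in T /\ x * y \in T},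
              T :&: J = [set 0] &
              {in R, forall r, exists2 t, t \in T & r - t \in J}]
          (is_ss_complement R J T).
Proof.
apply: (iffP and5P) => [[TR T1 /'forall_implyP Tcl /eqP TJ /'forall_implyP Tdec]|].
  split=> // [x y xT yT|r rR].
    by have /'forall_implyP/(_ y yT)/andP[] := Tcl x xT.
  by have /existsP[t /andP[tT rtJ]] := Tdec r rR; exists t.
case=> TR T1 Tcl TJ Tdec; split=> //; [|exact/eqP|].
  apply/'forall_implyP => x xT; apply/'forall_implyP => y yT.
  by have [-> ->] := Tcl x y xT yT.
apply/'forall_implyP => r rR; have [t tT rtJ] := Tdec r rR.
by apply/existsP; exists t; rewrite tT.
Qed.

Lemma ss_complement_subset_eq R J T T' :
  is_ss_complement R J T -> is_ss_complement R J T' -> T \subset T' -> T = T'.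
Proof.
move=> /ss_complementP[_ _ _ _ Tdec] /ss_complementP[T'R _ T'cl T'J _] /subsetP TT'.
apply/setP=> M; apply/idP/idP=> [/TT'//|MT'].
have [t tT MtJ] := Tdec M (subsetP T'R M MT').
have : M - t \in T' :&: J by rewrite inE MtJ (T'cl _ _ MT' (TT' t tT)).1.
by rewrite T'J inE subr_eq0 => /eqP ->.
Qed.

Lemma neq_ord_max_wid (j : 'I_n.+1) : j != ord_max -> exists j' : 'I_n, j = wid j'.
Proof.
move=> jN; have lt_jn : (j < n)%N.
  by rewrite ltn_neqAle -ltnS ltn_ord andbT; apply: contra jN => /eqP e; apply/eqP/val_inj.
by exists (Ordinal lt_jn); apply/val_inj.
Qed.

Lemma wid_neq_ord_max (j : 'I_n) : wid j != ord_max.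
Proof. by rewrite -val_eqE /= neq_ltn ltn_ord. Qed.

Lemma sum_ord_max (G : 'I_n.+1 -> F) :
  (forall k, k != ord_max -> G k = 0) -> \sum_k G k = G ord_max.
Proof. by move=> G0; rewrite (bigD1 ord_max) //= big1 ?addr0. Qed.

Definition blockdiag M : Prop :=
  forall i j, (i == ord_max) != (j == ord_max) -> M i j = 0.

Definition corner : 'M[F]_n.+1 := delta_mx ord_max ord_max.

Definition jpart M : 'M[F]_n.+1 :=
  \matrix_(i, j) if (i != ord_max) && (j == ord_max) then M i j else 0.

Local Notation J := (Jrad F n).

Lemma JradP M :
  reflect (forall i j, ~~ ((i != ord_max) && (j == ord_max)) -> M i j = 0) (M \in J).
Proof.
rewrite inE; apply: (iffP forallP) => [MJ i j ij | M0 i].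
  by move: (forallP (MJ i) j); rewrite (negbTE ij) implybF negbK => /eqP.
by apply/forallP => j; apply/implyP; apply: contraNT => ij; apply/eqP/M0.
Qed.

Lemma Jrad0 : 0 \in J.
Proof. by apply/JradP => i j _; rewrite mxE. Qed.

Lemma JradB U V : U \in J -> V \in J -> U - V \in J.
Proof.
by move=> /JradP U0 /JradP V0; apply/JradP => i j ij; rewrite !mxE U0 ?V0 ?subr0.
Qed.

Lemma JradZ a U : U \in J -> a *: U \in J.
Proof. by move=> /JradP U0; apply/JradP => i j ij; rewrite !mxE U0 ?mulr0. Qed.

Lemma Jrad_mul0 U V : U \in J -> V \in J -> U * V = 0.
Proof.
move=> /JradP U0 /JradP V0; apply/matrixP => i j; rewrite !mxE big1 // => k _.
have [->|kN] := eqVneq k ord_max; first by rewrite V0 ?mulr0 ?eqxx.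
by rewrite U0 ?mul0r // (negbTE kN) andbF.
Qed.

Lemma Jrad_mul_blockdiag U D : U \in J -> blockdiag D -> U * D = D ord_max ord_max *: U.
Proof.
move=> /JradP U0 Dbd; apply/matrixP => i j; rewrite !mxE.
rewrite (sum_ord_max (G := fun k => U i k * D k j)) => [|k kN]; last first.
  by rewrite U0 ?mul0r // (negbTE kN) andbF.
have [->|jN] := eqVneq j ord_max; first by rewrite mulrC.
by rewrite Dbd ?eqxx ?(negbTE jN) // mulr0 U0 ?mulr0 // (negbTE jN) andbF.
Qed.

Lemma blockdiag_mul_Jrad D U : blockdiag D -> U \in J -> D * U \in J.
Proof.
move=> Dbd /JradP U0; apply/JradP => i j ij; rewrite !mxE big1 // => k _.
have [ej|jN] := eqVneq j ord_max; last by rewrite U0 ?mulr0 // (negbTE jN) andbF.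
move: ij; rewrite ej eqxx andbT negbK => /eqP ->.
have [->|kN] := eqVneq k ord_max; first by rewrite U0 ?mulr0 ?eqxx.
by rewrite Dbd ?mul0r // eqxx (negbTE kN).
Qed.

Lemma Jrad_commutator D U : blockdiag D -> U \in J -> D * U - U * D \in J.
Proof.
move=> Dbd UJ; apply: JradB; first exact: blockdiag_mul_Jrad.
by rewrite Jrad_mul_blockdiag // JradZ.
Qed.

Lemma blockdiag1 : blockdiag 1.
Proof. by move=> i j; rewrite !mxE; have [->|] := eqVneq i j; rewrite ?eqxx. Qed.

Lemma blockdiagB D1 D2 : blockdiag D1 -> blockdiag D2 -> blockdiag (D1 - D2).
Proof. by move=> D1bd D2bd i j ij; rewrite !mxE D1bd ?D2bd ?subr0. Qed.

Lemma blockdiagM D1 D2 : blockdiag D1 -> blockdiag D2 -> blockdiag (D1 * D2).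
Proof.
move=> D1bd D2bd i j ij; rewrite !mxE big1 // => k _.
have [ki|ki] := eqVneq (k == ord_max) (i == ord_max).
  by rewrite D2bd ?mulr0 // ki.
by rewrite D1bd ?mul0r // eq_sym.
Qed.

Lemma blockdiag_corner : blockdiag corner.
Proof.
move=> i j; rewrite !mxE.
by case: (i == ord_max); case: (j == ord_max).
Qed.

Lemma corner_mul_Jrad U : U \in J -> corner * U = 0.
Proof.
move=> /JradP U0; apply/matrixP => i j; rewrite !mxE big1 // => k _.
rewrite !mxE; have [->|_] := eqVneq k ord_max; last by rewrite andbF mul0r.
by rewrite U0 ?mulr0 ?eqxx.
Qed.

Lemma Jrad_mul_corner U : U \in J -> U * corner = U.
Proof.
by move=> UJ; rewrite (Jrad_mul_blockdiag UJ blockdiag_corner) mxE !eqxx scale1r.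
Qed.

Lemma blockdiag_corner_comm D : blockdiag D -> D * corner = corner * D.
Proof.
move=> Dbd; apply/matrixP => i j; rewrite !mxE.
rewrite (sum_ord_max (G := fun k => D i k * corner k j)) => [|k kN]; last first.
  by rewrite !mxE (negbTE kN) mulr0.
rewrite (sum_ord_max (G := fun k => corner i k * D k j)) => [|k kN]; last first.
  by rewrite !mxE (negbTE kN) andbF mul0r.
rewrite !mxE !eqxx !andbT.
have [->|iN] := eqVneq i ord_max; have [->|jN] := eqVneq j ord_max.
- by rewrite mulr1 mul1r.
- by rewrite mulr0 mul1r Dbd // eqxx eq_sym (negbTE jN).
- by rewrite mulr1 mul0r Dbd // (negbTE iN) eqxx.
- by rewrite mulr0 mul0r.
Qed.

Lemma jpart_Jrad M : jpart M \in J.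
Proof. by apply/JradP => i j ij; rewrite mxE (negbTE ij). Qed.

Lemma jpart_id U : U \in J -> jpart U = U.
Proof.
by move/JradP => U0; apply/matrixP => i j; rewrite mxE; case: ifP => // /negbT/U0 ->.
Qed.

Lemma jpart_blockdiag D : blockdiag D -> jpart D = 0.
Proof.
move=> Dbd; apply/matrixP => i j; rewrite !mxE; case: ifP => // /andP[iN /eqP ->].
by rewrite Dbd // (negbTE iN) eqxx.
Qed.

Lemma blockdiag_Jrad_eq0 D : blockdiag D -> D \in J -> D = 0.
Proof. by move=> Dbd /jpart_id <-; rewrite jpart_blockdiag. Qed.

Lemma sqr0_conj_blockdiag U D :
  U \in J -> blockdiag D -> sqr0_conj U D = D + (D * U - U * D).
Proof.
move=> UJ Dbd; rewrite /sqr0_conj mulrBl mul1r mulrDr mulr1 mulrBl -[U * D * U]mulrA.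
by rewrite (Jrad_mul0 UJ (blockdiag_mul_Jrad Dbd UJ)) subr0 addrAC -addrA.
Qed.

Lemma sqr0_conj_corner U : U \in J -> sqr0_conj U corner = corner - U.
Proof.
move=> UJ; rewrite sqr0_conj_blockdiag //; last exact: blockdiag_corner.
by rewrite corner_mul_Jrad // Jrad_mul_corner // sub0r.
Qed.

Lemma commutator_corner_sub D j U : blockdiag D -> j \in J -> U \in J ->
  (D + j) * (corner - U) - (corner - U) * (D + j) = j - (D * U - U * D).
Proof.
move=> Dbd jJ UJ; rewrite mulrBr mulrBl !mulrDl !mulrDr.
rewrite (Jrad_mul_corner jJ) (corner_mul_Jrad jJ) (Jrad_mul0 jJ UJ) (Jrad_mul0 UJ jJ).
rewrite blockdiag_corner_comm // !addr0 opprB addrAC [_ + j]addrC.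
by rewrite -[j + _ + _]addrA subrKC opprB addrA.
Qed.

Section Aring.
Variables (K1 K2 : {pred F}).
Hypotheses (K1_subring : subring_closed K1) (K2_subring : subring_closed K2).
Local Notation R := (Aring F n K1 K2).

Lemma AringP M :
  reflect [/\ forall i j : 'I_n, M (wid i) (wid j) \in K1,
              forall j : 'I_n, M ord_max (wid j) = 0 &
              M ord_max ord_max \in K2] (M \in R).
Proof.
rewrite inE; apply: (iffP and3P) => [[/forallP M1 /forallP M2 M3] | [M1 M2 M3]].
  by split=> // [i j|j]; [exact: (forallP (M1 i) j) | exact/eqP].
by split=> //; apply/forallP => i; [apply/forallP => j; exact: M1 | exact/eqP].
Qed.

Lemma Aring_sub M1 M2 : M1 \in R -> M2 \in R -> M1 - M2 \in R.
Proof.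
case: K1_subring K2_subring => _ K1B _ [_ K2B _].
move=> /AringP[a1 a2 a3] /AringP[b1 b2 b3]; apply/AringP; split.
- by move=> i j; rewrite !mxE K1B.
- by move=> j; rewrite !mxE a2 b2 subr0.
- by rewrite !mxE K2B.
Qed.

Lemma Aring_mul M1 M2 : M1 \in R -> M2 \in R -> M1 * M2 \in R.
Proof.
have [K1_0 K1D] := GRing.zmod_closedD (GRing.subring_closedB K1_subring).
case: K1_subring K2_subring => _ _ K1M [_ _ K2M].
move=> /AringP[a1 a2 a3] /AringP[b1 b2 b3]; apply/AringP; split.
- move=> i j; rewrite !mxE big_ord_recr /= b2 mulr0 addr0.
  by apply: (big_ind (fun x => x \in K1)) => // k _; apply: K1M; [apply: a1 | apply: b1].
- move=> j; rewrite !mxE big1 // => k _.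
  have [->|kN] := eqVneq k ord_max; first by rewrite b2 mulr0.
  by have [k' ->] := neq_ord_max_wid kN; rewrite a2 mul0r.
- rewrite !mxE (sum_ord_max (G := fun k => M1 ord_max k * M2 k ord_max)) ?K2M //.
  by move=> k kN; have [k' ->] := neq_ord_max_wid kN; rewrite a2 mul0r.
Qed.

Lemma Jrad_Aring U : U \in J -> U \in R.
Proof.
have [K1_0 _] := GRing.subring_closedB K1_subring.
have [K2_0 _] := GRing.subring_closedB K2_subring.
move=> /JradP U0; apply/AringP; split=> [i j|j|]; rewrite U0 // ?eqxx //.
by rewrite negb_and negbK (negbTE (wid_neq_ord_max j)) orbT.
Qed.

Lemma Aring_add M1 M2 : M1 \in R -> M2 \in R -> M1 + M2 \in R.
Proof.
move=> M1R M2R; have -> : M1 + M2 = M1 - (0 - M2) by rewrite sub0r opprK.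
by rewrite Aring_sub // Aring_sub // Jrad_Aring // Jrad0.
Qed.

Lemma Aring1 : 1 \in R.
Proof.
have [[K1_1 _ _] [K1_0 _]] := (K1_subring, GRing.subring_closedB K1_subring).
case: K2_subring => K2_1 _ _; apply/AringP; split=> [i j|j|]; rewrite !mxE ?eqxx //.
- by case: (wid i == wid j).
- by rewrite eq_sym (negbTE (wid_neq_ord_max j)).
Qed.

Lemma Aring_corner : corner \in R.
Proof.
have [K1_0 _] := GRing.subring_closedB K1_subring.
case: K2_subring => K2_1 _ _; apply/AringP; split=> [i j|j|]; rewrite !mxE ?eqxx //.
- by rewrite (negbTE (wid_neq_ord_max i)).
- by rewrite (negbTE (wid_neq_ord_max j)) andbF.
Qed.

Lemma Aring_blockdiag M : M \in R -> blockdiag (M - jpart M).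
Proof.
case/AringP=> _ M0 _ i j; rewrite !mxE.
have [->|iN] := eqVneq i ord_max; have [->|jN] := eqVneq j ord_max => //= _.
- by have [j' ->] := neq_ord_max_wid jN; rewrite M0 subr0.
- by rewrite subrr.
Qed.

Definition Rdiag : {set 'M[F]_n.+1} := [set D in R | jpart D == 0].

Lemma RdiagP D : reflect (D \in R /\ blockdiag D) (D \in Rdiag).
Proof.
rewrite [X in reflect _ X]in_set; apply: (iffP andP) => [[DR /eqP D0] | [DR Dbd]].
  by split=> //; rewrite -[D]subr0 -D0; apply: Aring_blockdiag.
by rewrite DR jpart_blockdiag.
Qed.

Lemma Rdiag_dpart M : M \in R -> M - jpart M \in Rdiag.
Proof.
move=> MR; apply/RdiagP; split; last exact: Aring_blockdiag.
by rewrite Aring_sub // Jrad_Aring // jpart_Jrad.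
Qed.

Lemma Rdiag1 : 1 \in Rdiag.
Proof. by apply/RdiagP; split; [apply: Aring1 | apply: blockdiag1]. Qed.

Lemma Rdiag_corner : corner \in Rdiag.
Proof. by apply/RdiagP; split; [apply: Aring_corner | apply: blockdiag_corner]. Qed.

Lemma RdiagB D1 D2 : D1 \in Rdiag -> D2 \in Rdiag -> D1 - D2 \in Rdiag.
Proof.
move=> /RdiagP[D1R D1bd] /RdiagP[D2R D2bd].
by apply/RdiagP; split; [apply: Aring_sub | apply: blockdiagB].
Qed.

Lemma RdiagM D1 D2 : D1 \in Rdiag -> D2 \in Rdiag -> D1 * D2 \in Rdiag.
Proof.
move=> /RdiagP[D1R D1bd] /RdiagP[D2R D2bd].
by apply/RdiagP; split; [apply: Aring_mul | apply: blockdiagM].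
Qed.

Definition conj_compl U : {set 'M[F]_n.+1} := sqr0_conj U @: Rdiag.

Lemma conj_compl_is_complement U : U \in J -> is_ss_complement R J (conj_compl U).
Proof.
move=> UJ; have UU := Jrad_mul0 UJ UJ.
have conjE D : D \in Rdiag -> sqr0_conj U D = D + (D * U - U * D).
  by case/RdiagP => _ Dbd; apply: sqr0_conj_blockdiag.
apply/ss_complementP; split.
- apply/subsetP => _ /imsetP[D DR ->]; rewrite conjE //.
  by case/RdiagP: DR => DR Dbd; rewrite Aring_add // Jrad_Aring // Jrad_commutator.
- by rewrite -(sqr0_conj1 UU) imset_f ?Rdiag1.
- move=> _ _ /imsetP[D1 D1R ->] /imsetP[D2 D2R ->].
  by rewrite -sqr0_conjB -sqr0_conjM // !imset_f ?RdiagB ?RdiagM.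
- apply/setP => M; rewrite in_setI in_set1; apply/andP/eqP => [[/imsetP[D DR ->] MJ] | ->].
    have /RdiagP[_ Dbd] := DR.
    have DJ : D \in J.
      by rewrite -(addrK (D * U - U * D) D) -conjE // JradB ?Jrad_commutator.
    by rewrite (blockdiag_Jrad_eq0 Dbd DJ) /sqr0_conj mulr0 mul0r.
  split; last exact: Jrad0.
  have -> : 0 = sqr0_conj U 0 by rewrite /sqr0_conj mulr0 mul0r.
  by apply: imset_f; rewrite -(subrr 1) RdiagB ?Rdiag1.
- move=> r rR; exists (sqr0_conj U (r - jpart r)); first by rewrite imset_f ?Rdiag_dpart.
  rewrite conjE ?Rdiag_dpart // opprD addrA subKr.
  exact: JradB (jpart_Jrad r) (Jrad_commutator (Aring_blockdiag rR) UJ).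
Qed.

Lemma complement_conj_compl T :
  is_ss_complement R J T -> exists2 U, U \in J & T = conj_compl U.
Proof.
move=> Tcompl; have /ss_complementP[TR _ Tcl TJ Tdec] := Tcompl.
have [t tT UJ] := Tdec _ Aring_corner; exists (corner - t) => //.
apply: ss_complement_subset_eq Tcompl (conj_compl_is_complement UJ) _.
apply/subsetP => M MT; have DR := Rdiag_dpart (subsetP TR M MT).
have /RdiagP[_ Dbd] := DR.
have comm := commutator_corner_sub Dbd (jpart_Jrad M) UJ.
rewrite subrK subKr in comm.
have : M * t - t * M \in T :&: J.
  rewrite in_setI comm JradB ?jpart_Jrad ?Jrad_commutator // andbT -comm.
  by have [[_ Mt] [_ tM]] := (Tcl M t MT tT, Tcl t M tT MT); apply: (Tcl _ _ Mt tM).1.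
rewrite TJ in_set1 comm subr_eq0 => /eqP jM.
have -> : M = sqr0_conj (corner - t) (M - jpart M).
  by rewrite sqr0_conj_blockdiag // -jM subrK.
exact: imset_f.
Qed.

Lemma conj_compl_inj : {in J &, injective conj_compl}.
Proof.
move=> U V UJ VJ eqUV.
have /ss_complementP[_ _ Tcl TJ _] := conj_compl_is_complement VJ.
have cornerU : corner - U \in conj_compl V.
  by rewrite -eqUV -sqr0_conj_corner // imset_f ?Rdiag_corner.
have cornerV : corner - V \in conj_compl V.
  by rewrite -sqr0_conj_corner // imset_f ?Rdiag_corner.
have : (corner - U) - (corner - V) \in conj_compl V :&: J.
  by rewrite in_setI (Tcl _ _ cornerU cornerV).1 opprB addrC subrKA JradB.
by rewrite TJ in_set1 opprB addrC subrKA subr_eq0 eq_sym => /eqP.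
Qed.

Lemma Jrad_center : J :&: center_of R = [set 0].
Proof.
apply/setP => M; rewrite in_setI in_set1 [_ \in center_of _]inE.
apply/andP/eqP => [[MJ /andP[_ /forall_inP Mc]] | ->].
  by have /eqP := Mc _ Aring_corner; rewrite Jrad_mul_corner // corner_mul_Jrad.
rewrite Jrad0 Jrad_Aring ?Jrad0 //; split=> //.
by apply/forall_inP => y _; rewrite mul0r mulr0.
Qed.

End Aring.

End Radical.

Theorem lemma3p1 (p d1 d2 n : nat) (F : finFieldType) :
  prime p -> (0 < d1)%N -> (0 < d2)%N -> (0 < n)%N ->
  #|F| = (p ^ lcmn d1 d2)%N ->
  let R := Aring F n (subfieldOf (F:=F) (p ^ d1)) (subfieldOf (F:=F) (p ^ d2)) in
  let J := Jrad F n in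
  J :&: center_of R = [set 0] /\ #|ss_complements R J| = #|J|.
Proof.
move=> p_prime _ _ _ cardF R J.
have pcharFp : p \in [pchar F] := card_finPcharP cardF p_prime.
have K1_subring := subfieldOf_subring_closed d1 pcharFp.
have K2_subring := subfieldOf_subring_closed d2 pcharFp.
split; first exact: Jrad_center.
have -> : ss_complements R J = conj_compl (subfieldOf (p ^ d1)) (subfieldOf (p ^ d2)) @: J.
  apply/setP => T; rewrite inE; apply/idP/imsetP => [|[U UJ ->]].
    by case/(complement_conj_compl K1_subring K2_subring) => U UJ ->; exists U.
  exact: conj_compl_is_complement.
exact/card_in_imset/conj_compl_inj.
Qed.
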